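(* Let $S_2=\mathrm{span}\langle e,f\rangle$ be the two-dimensional Lie triple system with $[e,f,e]=2e$, $[e,f,f]=-2f$, over a field of characteristic zero, and let $U(S_2)$ be its universal enveloping algebra. Then for all $n\ge 0$, $$(e^n,f,f)\,e=n\,e^nf-n(n-1)\,e^{n-1},$$ where $(x,y,z)=(xy)z-x(yz)$ and $e^nf$ denotes the product of $e^n$ with $f$.
   Context: A Lie triple system (L.t.s.) is a vector space $T$ with a trilinear product $[x,y,z]$ satisfying $[x,x,y]=0$, $[x,y,z]+[y,z,x]+[z,x,y]=0$, and $[a,b,[x,y,z]]=[[a,b,x],y,z]+[x,[a,b,y],z]+[x,y,[a,b,z]]$; the product on $S_2$ is determined by the given values together with these identities. For a unital nonassociative algebra $A$, $\mathrm{LN_{alt}}(A)=\{a\in A : (a,x,y)=-(x,a,y)\ \forall x,y\in A\}$ is an L.t.s. with $[a,b,c]=a(bc)-b(ac)-c(ab)+c(ba)$. The universal enveloping algebra $U(T)$ is the unital algebra with an L.t.s. monomorphism $T\to\mathrm{LN_{alt}}(U(T))$ (elements of $T$ identified with their images) such that $ab=ba$ for $a,b\in T$, universal for L.t.s. homomorphisms into $\mathrm{LN_{alt}}(A)$ with this commutation property. For $c\in T$ the subalgebra generated by $c$ is associative, so $c^n$ is well defined ($c^0=1$); for $n=0$ the term $n(n-1)e^{n-1}$ is $0$. *)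

From HB Require Import structures.
From mathcomp Require Import all_boot all_order all_algebra.
Set Implicit Arguments. Unset Strict Implicit. Unset Printing Implicit Defensive.
Import GRing.Theory.
Local Open Scope ring_scope.

Record NAlg (K : fieldType) := {
  carrier :> lmodType K;
  amul : carrier -> carrier -> carrier;
  aone : carrier;
  amulDl : forall x y z, amul (x + y) z = amul x z + amul y z;
  amulDr : forall x y z, amul x (y + z) = amul x y + amul x z;
  amulZl : forall (a : K) x y, amul (a *: x) y = a *: amul x y;
  amulZr : forall (a : K) x y, amul x (a *: y) = a *: amul x y;
  amul1l : forall x, amul aone x = x;
  amul1r : forall x, amul x aone = x
}.
Arguments amul {K} _ _ _.
Arguments aone {K} _.

Section Ops.
Variables (K : fieldType) (A : NAlg K).
Local Notation "x ** y" := (amul A x y) (at level 40, left associativity).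

Definition assoc (x y z : A) : A := (x ** y) ** z - x ** (y ** z).

Definition in_LNalt (a : A) : Prop :=
  forall x y : A, assoc a x y = - assoc x a y.

Definition ltp (a b c : A) : A :=
  a ** (b ** c) - b ** (a ** c) - c ** (a ** b) + c ** (b ** a).

Definition apow (c : A) (n : nat) : A := iter n (amul A c) (aone A).

End Ops.

(* The Lie triple system S_2 = span<e,f>, modelled as K * K with
   e = (1,0), f = (0,1).  The trilinear product determined by
   [e,f,e] = 2e, [e,f,f] = -2f and the L.t.s. identities is
   [x,y,z] = 2 (x1 y2 - x2 y1) (z1 e - z2 f). *)
Definition S2 (K : fieldType) := (K * K)%type.
Definition S2br (K : fieldType) (x y z : S2 K) : S2 K :=
  let d := 2 * (x.1 * y.2 - x.2 * y.1) in (d * z.1, - (d * z.2)).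

Definition S2map (K : fieldType) (A : NAlg K) (a b : A) (x : S2 K) : A :=
  x.1 *: a + x.2 *: b.

(* (a,b) are the images of (e,f) under an L.t.s. homomorphism
   S_2 -> LN_alt(A) whose image consists of pairwise commuting elements *)
Definition S2hom (K : fieldType) (A : NAlg K) (a b : A) : Prop :=
  [/\ forall x, in_LNalt (S2map a b x),
      forall x y z, S2map a b (S2br x y z)
                    = ltp (S2map a b x) (S2map a b y) (S2map a b z)
    & forall x y, amul A (S2map a b x) (S2map a b y)
                  = amul A (S2map a b y) (S2map a b x)].

Definition is_alg_hom (K : fieldType) (A B : NAlg K) (h : A -> B) : Prop :=
  [/\ forall (k : K) x y, h (k *: x + y) = k *: h x + h y,
      forall x y, h (amul A x y) = amul B (h x) (h y)
    & h (aone A) = aone B].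

(* (U, e, f) is a universal enveloping algebra of S_2, with e, f the images
   of the basis vectors e, f: the map S_2 -> U is an injective L.t.s.
   homomorphism into LN_alt(U) with commuting image, universal among all
   such maps into unital algebras. *)
Definition is_UEA_S2 (K : fieldType) (U : NAlg K) (e f : U) : Prop :=
  [/\ S2hom e f,
      injective (S2map e f)
    & forall (A : NAlg K) (a b : A), S2hom a b ->
        (exists h : U -> A, [/\ is_alg_hom h, h e = a & h f = b]) /\
        (forall h h' : U -> A,
            is_alg_hom h -> h e = a -> h f = b ->
            is_alg_hom h' -> h' e = a -> h' f = b ->
            forall u, h u = h' u)].

From mathcomp Require Import all_boot all_order all_algebra ring.
Set Implicit Arguments. Unset Strict Implicit. Unset Printing Implicit Defensive.
Import GRing.Theory.
Local Open Scope ring_scope.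

(* Elements a of LN_alt(A) satisfy the identity
   (a x) y + (x a) y = a (x y) + x (a y); for a = e it shows that e^n acts on
   the left as the n-th iterate of L_e.  The operator D = [L_e, L_f] obeys the
   Leibniz rule D (e y) = e (D y) + (D e) y with D e = 2 e, which gives the
   commutation rule f e^m = e^m f - m(m-1) e^(m-1) and, more generally, a
   formula for f (e^m y).  Feeding these into the identity for f at (e^m, e)
   and (e^n, f) yields (e^m f) e = e^(m+1) f - m e^m and
   (e^n, f, f) = n e^(n-1) f, and the theorem follows.  Every identity comes
   out doubled, so only 2 != 0 is needed. *)

Lemma mulSn_pred m : (m.+1 * m = m * m.-1 + 2 * m)%N.
Proof. by case: m => [|m] //=; ring. Qed.

(* Multiplying by [m] makes the junk value [0.-1 = 0] harmless. *)
Lemma mulrn_predS (V : nmodType) (F : nat -> V) m : F m.-1.+1 *+ m = F m *+ m.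
Proof. by case: m. Qed.

Lemma natmul2_inj (K : fieldType) (V : lmodType K) (x y : V) :
  (2 : K) != 0 -> x *+ 2 = y *+ 2 -> x = y.
Proof. by move=> two; rewrite -!scaler_nat => /(scalerI two). Qed.

Section NAlgTheory.
Variables (K : fieldType) (U : NAlg K).
Local Notation "x ** y" := (amul U x y) (at level 40, left associativity).

Lemma amulNl (x y : U) : (- x) ** y = - (x ** y).
Proof. by rewrite -scaleN1r amulZl scaleN1r. Qed.

Lemma amulNr (x y : U) : x ** (- y) = - (x ** y).
Proof. by rewrite -scaleN1r amulZr scaleN1r. Qed.

Lemma amulBl (x y z : U) : (x - y) ** z = x ** z - y ** z.
Proof. by rewrite amulDl amulNl. Qed.

Lemma amulBr (x y z : U) : x ** (y - z) = x ** y - x ** z.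
Proof. by rewrite amulDr amulNr. Qed.

Lemma amulMnl (x y : U) n : (x *+ n) ** y = (x ** y) *+ n.
Proof. by rewrite -!scaler_nat amulZl. Qed.

Lemma amulMnr (x y : U) n : x ** (y *+ n) = (x ** y) *+ n.
Proof. by rewrite -!scaler_nat amulZr. Qed.

Lemma amulr0 (x : U) : x ** 0 = 0.
Proof. by rewrite -(mulr0n x) amulMnr mulr0n. Qed.

Lemma in_LNalt_expand (a : U) : in_LNalt a ->
  forall x y, (a ** x) ** y + (x ** a) ** y = a ** (x ** y) + x ** (a ** y).
Proof.
move=> Ha x y; apply/eqP; rewrite -subr_eq0 opprD addrACA.
by have := Ha x y; rewrite /assoc => ->; rewrite addNr.
Qed.

End NAlgTheory.

Section LNaltPowers.
Variables (K : fieldType) (U : NAlg K) (a : U).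
Hypotheses (Ha : in_LNalt a) (two : (2 : K) != 0).
Local Notation "x ** y" := (amul U x y) (at level 40, left associativity).

Lemma apow_mull n y : apow a n ** y = iter n (amul U a) y.
Proof.
elim: n y => [|n IHn] y; first exact: amul1l.
have apowSr : apow a n ** a = apow a n.+1 by rewrite IHn /apow iterSr amul1r.
apply: natmul2_inj two _; rewrite !mulr2n.
have := in_LNalt_expand Ha (apow a n) y; rewrite apowSr => ->.
by rewrite !IHn -iterSr.
Qed.

Lemma apowSr n : apow a n ** a = apow a n.+1.
Proof. by rewrite apow_mull /apow iterSr amul1r. Qed.

Lemma apowS_mull n y : apow a n.+1 ** y = a ** (apow a n ** y).
Proof. by rewrite !apow_mull. Qed.

Lemma apow_mullS n y : apow a n.+1 ** y = apow a n ** (a ** y).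
Proof. by rewrite !apow_mull iterSr. Qed.

End LNaltPowers.

Section S2Hom.
Variables (K : fieldType) (U : NAlg K) (e f : U).
Hypotheses (Hhom : S2hom e f) (two : (2 : K) != 0).
Local Notation "x ** y" := (amul U x y) (at level 40, left associativity).

Lemma S2map_e : S2map e f (1, 0) = e.
Proof. by rewrite /S2map /= scale1r scale0r addr0. Qed.

Lemma S2map_f : S2map e f (0, 1) = f.
Proof. by rewrite /S2map /= scale1r scale0r add0r. Qed.

Lemma S2hom_LNalt_e : in_LNalt e.
Proof. by case: Hhom => Hln _ _; rewrite -S2map_e. Qed.

Lemma S2hom_LNalt_f : in_LNalt f.
Proof. by case: Hhom => Hln _ _; rewrite -S2map_f. Qed.

Lemma S2hom_comm : e ** f = f ** e.
Proof. by case: Hhom => _ _ /(_ (1, 0) (0, 1)); rewrite S2map_e S2map_f. Qed.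

Lemma S2hom_ltp_efe : ltp e f e = e *+ 2.
Proof.
case: Hhom => _ /(_ (1, 0) (0, 1) (1, 0)); rewrite S2map_e S2map_f => <-.
by rewrite /S2br /S2map /= !(mulr1, mulr0, subr0, oppr0, scale0r, addr0) scaler_nat.
Qed.

Lemma S2hom_ltp_eff : ltp e f f = - (f *+ 2).
Proof.
case: Hhom => _ /(_ (1, 0) (0, 1) (0, 1)); rewrite S2map_e S2map_f => <-.
by rewrite /S2br /S2map /= !(mulr1, mulr0, subr0, scale0r, add0r) scaleNr scaler_nat.
Qed.

Local Notation E n := (apow e n).

Definition D y := e ** (f ** y) - f ** (e ** y).

Lemma D1 : D (aone U) = 0.
Proof. by rewrite /D !amul1r S2hom_comm subrr. Qed.

Lemma Df : D f = - (f *+ 2).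
Proof. by rewrite -S2hom_ltp_eff /ltp /D S2hom_comm subrK. Qed.

Lemma mulf_ee : f ** (e ** e) = e ** (e ** f) - e *+ 2.
Proof. by rewrite -S2hom_ltp_efe /ltp -S2hom_comm subrK subKr. Qed.

Lemma mulef_sym z : (e ** f) ** z *+ 2 = e ** (f ** z) + f ** (e ** z).
Proof. by rewrite -(in_LNalt_expand S2hom_LNalt_e) -S2hom_comm mulr2n. Qed.

Lemma mul_ef_e : (e ** f) ** e = e ** (e ** f) - e.
Proof.
apply: natmul2_inj two _.
by rewrite mulef_sym -S2hom_comm mulf_ee mulrnBl addrA -mulr2n.
Qed.

Lemma mulee_l z : (e ** e) ** z = e ** (e ** z).
Proof. by have := apow_mull S2hom_LNalt_e two 2 z; rewrite /apow /= amul1r. Qed.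

Lemma mulf_ee_sym y :
  f ** (e ** (e ** y)) + e ** (e ** (f ** y)) = ((e ** (e ** f)) ** y - e ** y) *+ 2.
Proof.
have := in_LNalt_expand S2hom_LNalt_f (e ** e) y; rewrite mulf_ee !mulee_l => <-.
by rewrite amulBl amulMnl mulrnBl addrAC -mulr2n.
Qed.

Lemma mul_eef_l y : (e ** (e ** f)) ** y = e ** (f ** (e ** y)).
Proof.
have H := in_LNalt_expand S2hom_LNalt_e (e ** f) y.
rewrite mul_ef_e amulBl in H.
apply: natmul2_inj two _; apply: (addIr ((e ** (e ** f) ** y - e ** y) *+ 2)).
rewrite -[in RHS]mulf_ee_sym -mulrnDl H mulrnDl -[in LHS]amulMnr !mulef_sym amulDr.
set A := e ** (e ** (f ** y)); set B := e ** (f ** (e ** y)).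
by rewrite mulr2n [RHS]addrACA addrC [B + A]addrC.
Qed.

(* The Leibniz rule for D on e y, since D e = 2 e. *)
Lemma D_mule y : D (e ** y) = e ** D y + (e ** y) *+ 2.
Proof.
set B := e ** (f ** (e ** y)).
have HC := mulf_ee_sym y; rewrite mul_eef_l -/B in HC.
rewrite /D amulBr; apply: (addIr (f ** (e ** (e ** y)))); rewrite subrK.
rewrite [RHS]addrC !addrA HC mulrnBl -addrA -mulr2n [_ - B]addrAC subrK.
by rewrite mulr2n addrK.
Qed.

Lemma mulrn_apow_pred m w : (e ** (E m.-1 ** w)) *+ m = (E m ** w) *+ m.
Proof. by case: m => [|m]; rewrite ?mulr0n // -(apowS_mull S2hom_LNalt_e two). Qed.

Lemma D_apow_mull k y : D (E k ** y) = E k ** D y + (E k ** y) *+ (2 * k).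
Proof.
elim: k y => [|k IHk] y; first by rewrite !amul1l muln0 addr0.
rewrite !(apowS_mull S2hom_LNalt_e two) D_mule IHk amulDr amulMnr.
by rewrite -!(apowS_mull S2hom_LNalt_e two) -addrA -mulrnDr addnC mulnS.
Qed.

Lemma mulf_apow_mull m y :
  f ** (E m ** y) = E m ** (f ** y) - (E m.-1 ** D y) *+ m - (E m.-1 ** y) *+ (m * m.-1).
Proof.
elim: m y => [|m IHm] y; first by rewrite !amul1l !mulr0n !subr0.
have fe_swap z : f ** (e ** z) = e ** (f ** z) - D z by rewrite /D subKr.
rewrite !(apowS_mull S2hom_LNalt_e two) fe_swap IHm D_apow_mull.
rewrite [e ** (_ - _)]amulBr [e ** (_ - _)]amulBr !amulMnr [_ *+ (m * _)]mulrnA.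
rewrite !mulrn_apow_pred -mulrnA -(apowS_mull S2hom_LNalt_e two) succnK.
set P := E m ** D y; set Q := E m ** y.
rewrite mulSn_pred [Q *+ (_ + _)]mulrnDr mulrSr !opprD !addrA.
by rewrite [_ - Q *+ (m * _) - P]addrAC.
Qed.

Lemma mulf_apow m : f ** E m = E m ** f - E m.-1 *+ (m * m.-1).
Proof.
by have := mulf_apow_mull m (aone U); rewrite !amul1r D1 amulr0 mul0rn subr0.
Qed.

Lemma mul_apowf_e m : (E m ** f) ** e = E m.+1 ** f - E m *+ m.
Proof.
have H := in_LNalt_expand S2hom_LNalt_f (E m) e.
rewrite (apowSr S2hom_LNalt_e two) -S2hom_comm -(apow_mullS S2hom_LNalt_e two) in H.
rewrite !mulf_apow amulBl amulMnl mulrnA (apowSr S2hom_LNalt_e two) mulrn_predS -mulrnA in H.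
rewrite succnK mulSn_pred [E m *+ (_ + _)]mulrnDr in H.
set X := E m ** f ** e in H *; set Z := E m.+1 ** f in H *.
apply: natmul2_inj two _; apply: (addIr (- (E m *+ (m * m.-1)))).
rewrite mulr2n addrAC H mulrnBl -mulrnA [(m * 2)%N]mulnC opprD addrA.
by rewrite addrAC [LHS]addrAC [Z - _ + Z]addrAC mulr2n.
Qed.

Lemma assoc_apow_ff n : assoc (E n) f f = (E n.-1 ** f) *+ n.
Proof.
have H := in_LNalt_expand S2hom_LNalt_f (E n) f.
rewrite mulf_apow amulBl amulMnl mulf_apow_mull Df amulNr amulMnr mulNrn opprK in H.
set X := E n ** f ** f in H *; set Y := E n ** (f ** f) in H *.
set P := E n.-1 ** f in H *.
rewrite /assoc; apply: natmul2_inj two _; apply/eqP; rewrite mulrnBl subr_eq; apply/eqP.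
apply: (addIr (- (P *+ (n * n.-1)))).
rewrite mulr2n addrAC H mulrnAC -/Y; set Q := P *+ n *+ 2.
by rewrite [LHS]addrAC [Y + _]addrC -[Q + Y + Y]addrA -mulr2n.
Qed.

Lemma assoc_apow_ff_mulr_e n :
  assoc (E n) f f ** e = n%:R *: (E n ** f) - (n * n.-1)%:R *: E n.-1.
Proof.
rewrite assoc_apow_ff amulMnl !scaler_nat.
case: n => [|n]; first by rewrite !mulr0n subr0.
by rewrite succnK mul_apowf_e mulrnBl -mulrnA mulnC.
Qed.

End S2Hom.

Theorem mainTheorem5 (K : fieldType) (charK0 : [pchar K] =i pred0)
    (U : NAlg K) (e f : U) (HU : is_UEA_S2 e f) (n : nat) :
  amul U (assoc (apow e n) f f) e
  = n%:R *: amul U (apow e n) f - (n * n.-1)%:R *: apow e n.-1.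
Proof.
have two : (2 : K) != 0.
  by apply/negP => /natf0_pchar [//|p]; rewrite charK0.
case: HU => Hhom _ _.
exact: assoc_apow_ff_mulr_e Hhom two n.
Qed.
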